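(* Let $W$ be a finite Weyl group with affine Weyl group $\tilde W=W\ltimes Z$. Let $X$ be a conjugacy class of involutions in $\tilde W$ that contains $(a,\mathbf 0)$ for some involution $a$ of $W$, and let $\hat X$ be the conjugacy class of $a$ in $W$. Suppose that $\mathcal{C}(W,\hat X)$ is connected with diameter $d$, and that there is an integer $k$ such that whenever $(a,\mathbf u)\in X$, there is some $\hat x\in\hat X$ such that $d((a,\mathbf u),(\hat x,\mathbf 0))\le k$ in $\mathcal{C}(\tilde W,X)$. Then $\mathcal{C}(\tilde W,X)$ is connected with diameter at most $d+k$.
   Context: $W$ is a finite Weyl group with root system $\Phi$ in a Euclidean space $V$, and $Z$ is the coroot lattice $L(\Phi^\vee)$ (with $\alpha^\vee=2\alpha/\langle\alpha,\alpha\rangle$) viewed as translations. $\tilde W$ consists of pairs $(a,\mathbf u)$, $a\in W$, $\mathbf u\in Z$, with multiplication $(a,\mathbf u)(b,\mathbf v)=(ab,\mathbf u^b+\mathbf v)$, where $\mathbf u\mapsto\mathbf u^b$ is the (right) linear action of $W$ on $V$. $\mathcal{C}(G,X)$ is the graph on a set $X$ of involutions of $G$ with $x,y$ adjacent iff they commute; $d$ denotes graph distance and the diameter is the maximal distance between vertices. *)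

From HB Require Import structures.
From mathcomp Require Import all_boot all_order all_algebra.
From mathcomp Require Import reals.
Set Implicit Arguments. Unset Strict Implicit. Unset Printing Implicit Defensive.
Import Order.TTheory GRing.Theory Num.Theory.
Local Open Scope ring_scope.

Section Weyl.
Variables (R : realType) (n : nat).

Definition dotv (u v : 'rV[R]_n) : R := (u *m v^T) 0 0.

Definition coroot (a : 'rV[R]_n) : 'rV[R]_n := (2 / dotv a a) *: a.

(* reflection s_a, acting on the right on row vectors:
   v *m refl a = v - <v, a^vee> a *)
Definition refl (a : 'rV[R]_n) : 'M[R]_n := 1%:M - (coroot a)^T *m a.

(* (reduced, crystallographic) root system spanning V *)
Definition is_root_system (Phi : seq 'rV[R]_n) : Prop :=
  [/\ forall a, a \in Phi -> a != 0,
      row_full (\matrix_(i < size Phi) Phi`_i),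
      forall a b, a \in Phi -> b \in Phi -> b *m refl a \in Phi,
      forall a b, a \in Phi -> b \in Phi ->
        exists z : int, dotv b (coroot a) = z%:~R
    & forall a (c : R), a \in Phi -> c *: a \in Phi -> c = 1 \/ c = -1].

Inductive in_weyl (Phi : seq 'rV[R]_n) : 'M[R]_n -> Prop :=
| weyl_one : in_weyl Phi 1%:M
| weyl_step M a : in_weyl Phi M -> a \in Phi -> in_weyl Phi (M *m refl a).

Definition in_coroot_lattice (Phi : seq 'rV[R]_n) (u : 'rV[R]_n) : Prop :=
  exists c : 'I_(size Phi) -> int, u = \sum_(i < size Phi) coroot Phi`_i *~ c i.

Definition in_affine (Phi : seq 'rV[R]_n) (g : 'M[R]_n * 'rV[R]_n) : Prop :=
  in_weyl Phi g.1 /\ in_coroot_lattice Phi g.2.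

Definition amul (g h : 'M[R]_n * 'rV[R]_n) : 'M[R]_n * 'rV[R]_n :=
  (g.1 *m h.1, g.2 *m h.1 + h.2).

Definition affine_conj (Phi : seq 'rV[R]_n) (x y : 'M[R]_n * 'rV[R]_n) : Prop :=
  exists g, in_affine Phi g /\ amul g y = amul x g.

Definition weyl_conj (Phi : seq 'rV[R]_n) (x y : 'M[R]_n) : Prop :=
  exists w, in_weyl Phi w /\ w *m y = x *m w.

End Weyl.

Definition cadj {T : Type} (mul : T -> T -> T) (X : T -> Prop) (x y : T) : Prop :=
  X x /\ X y /\ mul x y = mul y x.

(* within adj x y m  <->  graph distance d(x,y) <= m *)
Fixpoint within {T : Type} (adj : T -> T -> Prop) (x y : T) (m : nat) : Prop :=
  match m with
  | 0 => x = y
  | m'.+1 => x = y \/ exists z, adj x z /\ within adj z y m'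
  end.

Definition conn_diam {T : Type} (mul : T -> T -> T) (X : T -> Prop) (D : nat) : Prop :=
  (forall x y, X x -> X y -> within (cadj mul X) x y D) /\
  (exists x y, X x /\ X y /\ forall m, within (cadj mul X) x y m -> (D <= m)%N).

Definition conn_diam_le {T : Type} (mul : T -> T -> T) (X : T -> Prop) (D : nat) : Prop :=
  forall x y, X x -> X y -> within (cadj mul X) x y D.

From HB Require Import structures.
From mathcomp Require Import all_boot all_order all_algebra.
From mathcomp Require Import reals.
Set Implicit Arguments.
Unset Strict Implicit.
Unset Printing Implicit Defensive.
Import Order.TTheory GRing.Theory Num.Theory.
Local Open Scope ring_scope.

(* Conjugation by any element of the affine Weyl group is an automorphism of
   C(W~, X), and these automorphisms act transitively on X, so it suffices to
   bound the distance from (a, 0) to any y = (b, v) in X.  If (w, u) conjugates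
   y to (a, 0), then w b w^-1 = a, so conjugating by (w, 0) alone moves y to
   (a, v w^-1) and moves (a, 0) to (w a w^-1, 0).  The latter lies in the copy
   {(x, 0) | x in X^} of C(W, X^), hence within d of any (x^, 0), and by
   hypothesis some such (x^, 0) is within k of (a, v w^-1). *)

Section GraphDistance.
Variables (T : Type) (adj : T -> T -> Prop).

Lemma within_refl x m : within adj x x m.
Proof. by case: m => [|m] /=; [|left]. Qed.

Lemma within_mono x y m m' : (m <= m')%N -> within adj x y m -> within adj x y m'.
Proof.
elim: m x m' => [|m IH] x [|m'] //= le_mm'; first by move=> ->; left.
by case=> [->|[z [xz zy]]]; [left | right; exists z; split; last exact: IH zy].
Qed.

Lemma within_trans x y z m m' :
  within adj x y m -> within adj y z m' -> within adj x z (m + m').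
Proof.
elim: m x => [|m IH] x; first by move=> /= ->.
case=> [-> yz|[w [xw wy]] yz]; first by apply: within_mono yz; rewrite leq_addl.
by rewrite addSn; right; exists w; split; last exact: IH.
Qed.

Lemma within_sym x y m :
  (forall x y, adj x y -> adj y x) -> within adj x y m -> within adj y x m.
Proof.
move=> adj_sym; elim: m x => [|m IH] x; first by move=> /= ->.
case=> [->|[w [xw wy]]]; first exact: within_refl.
rewrite -addn1; apply: within_trans (IH _ wy) _.
by right; exists x; split; [apply: adj_sym|].
Qed.

End GraphDistance.

Lemma within_map (T U : Type) (adjT : T -> T -> Prop) (adjU : U -> U -> Prop)
    (f : T -> U) x y m :
  (forall x y, adjT x y -> adjU (f x) (f y)) ->
  within adjT x y m -> within adjU (f x) (f y) m.
Proof.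
move=> f_adj; elim: m x => [|m IH] x; first by move=> /= ->.
case=> [->|[w [xw wy]]]; first exact: within_refl.
by right; exists (f w); split; [apply: f_adj | apply: IH].
Qed.

Lemma cadj_sym (T : Type) (mul : T -> T -> T) (X : T -> Prop) x y :
  cadj mul X x y -> cadj mul X y x.
Proof. by case=> Xx [Xy xy]. Qed.

Section Reflections.
Variables (R : realType) (n : nat).
Implicit Types (b u v : 'rV[R]_n).

Lemma dotvC u v : dotv u v = dotv v u.
Proof. by rewrite /dotv !mxE; apply: eq_bigr => i _; rewrite !mxE mulrC. Qed.

Lemma dotvZl (s : R) u v : dotv (s *: u) v = s * dotv u v.
Proof. by rewrite /dotv -scalemxAl mxE. Qed.

Lemma dotv_self_eq0 b : (dotv b b == 0) = (b == 0).
Proof.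
apply/eqP/eqP => [bb0|->]; last by rewrite /dotv mul0mx mxE.
have sq_ge0 i : true -> 0 <= b 0 i * b^T i 0 by rewrite mxE -expr2 sqr_ge0.
apply/rowP => j; move: bb0; rewrite /dotv mxE => /(psumr_eq0P sq_ge0)/(_ j isT).
by rewrite !mxE => /eqP; rewrite mulf_eq0 orbb => /eqP.
Qed.

Lemma coroot_dot b : b != 0 -> dotv (coroot b) b = 2.
Proof. by move=> nz_b; rewrite dotvZl mulfVK // dotv_self_eq0. Qed.

Lemma reflE b v : v *m refl b = v - dotv v b *: coroot b.
Proof.
rewrite /refl mulmxBr mulmx1 mulmxA /coroot linearZ /= -scalemxAr.
by rewrite [v *m b^T]mx11_scalar -scalemxAl mul_scalar_mx !scalerA mulrC.
Qed.

Lemma refl_coroot b : b != 0 -> coroot b *m refl b = - coroot b.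
Proof.
by move=> nz_b; rewrite reflE coroot_dot // scaler_nat mulr2n opprD addrA subrr add0r.
Qed.

Lemma reflK b : b != 0 -> refl b *m refl b = 1%:M.
Proof.
move=> nz_b; have reflK_row v : v *m refl b *m refl b = v.
  rewrite [v *m refl b]reflE mulmxBl -scalemxAl refl_coroot //.
  by rewrite scalerN opprK reflE subrK.
apply/row_matrixP => i.
by rewrite row_mul -[X in row i X *m _]mul1mx row_mul reflK_row.
Qed.

End Reflections.

Section AffineProduct.
Variables (R : realType) (n : nat).
Implicit Types (w : 'M[R]_n) (g x y z : 'M[R]_n * 'rV[R]_n).

Definition aunit : 'M[R]_n * 'rV[R]_n := (1%:M, 0).
Definition ainv g : 'M[R]_n * 'rV[R]_n := (invmx g.1, - (g.2 *m invmx g.1)).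
Definition aconj g z := amul (ainv g) (amul z g).

Lemma amulA x y z : amul (amul x y) z = amul x (amul y z).
Proof. by rewrite /amul /= !mulmxA mulmxDl addrA. Qed.

Lemma amul1g z : amul aunit z = z.
Proof. by case: z => w u; rewrite /amul /= mul1mx mul0mx add0r. Qed.

Lemma amulg1 z : amul z aunit = z.
Proof. by case: z => w u; rewrite /amul /= !mulmx1 addr0. Qed.

Section Invertible.
Variable g : 'M[R]_n * 'rV[R]_n.
Hypothesis unit_g : g.1 \in unitmx.

Lemma amulgV : amul g (ainv g) = aunit.
Proof. by rewrite /amul /= mulmxV // subrr. Qed.

Lemma amulVg : amul (ainv g) g = aunit.
Proof. by rewrite /amul /= mulVmx // mulNmx mulmxKV // addNr. Qed.

Lemma ainv_unitmx : (ainv g).1 \in unitmx.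
Proof. by rewrite unitmx_inv. Qed.

Lemma ainvK : ainv (ainv g) = g.
Proof. by case: g unit_g => w u /= W; rewrite /ainv /= invmxK mulNmx mulmxKV // opprK. Qed.

Lemma aconjM x y : aconj g (amul x y) = amul (aconj g x) (aconj g y).
Proof. by rewrite /aconj !amulA -[amul g (amul (ainv g) _)]amulA amulgV amul1g. Qed.

Lemma aconjK : cancel (aconj g) (aconj (ainv g)).
Proof.
move=> z; rewrite /aconj ainvK -!amulA amulgV amul1g.
by rewrite amulA amulgV amulg1.
Qed.

End Invertible.

Lemma aconjKV g : g.1 \in unitmx -> cancel (aconj (ainv g)) (aconj g).
Proof. by move=> unit_g z; rewrite -{1}(ainvK unit_g) aconjK // ainv_unitmx. Qed.

Lemma amul_pair0 w1 w2 : amul (w1, 0) (w2, 0) = (w1 *m w2, 0).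
Proof. by rewrite /amul /= mul0mx addr0. Qed.

Lemma aconj_pair0 w z : aconj (w, 0) z = (invmx w *m z.1 *m w, z.2 *m w).
Proof. by rewrite /aconj /ainv /amul /= mul0mx oppr0 mul0mx add0r addr0 mulmxA. Qed.

End AffineProduct.

Section AffineWeylGroup.
Variables (R : realType) (n : nat) (Phi : seq 'rV[R]_n).
Hypothesis rootPhi : is_root_system Phi.
Implicit Types (u v : 'rV[R]_n) (w : 'M[R]_n) (g h x y z : 'M[R]_n * 'rV[R]_n).

Lemma weyl_mul w1 w2 : in_weyl Phi w1 -> in_weyl Phi w2 -> in_weyl Phi (w1 *m w2).
Proof.
move=> W1; elim=> [|w b _ IH Phi_b]; first by rewrite mulmx1.
by rewrite mulmxA; apply: weyl_step.
Qed.

Lemma weyl_refl b : b \in Phi -> in_weyl Phi (refl b).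
Proof. by rewrite -[refl b]mul1mx; apply: weyl_step; apply: weyl_one. Qed.

Lemma weyl_inv w : in_weyl Phi w -> exists2 w', in_weyl Phi w' & w' *m w = 1%:M.
Proof.
elim=> {w} [|w b _ [w' W' w'w] Phi_b].
  by exists 1%:M; [apply: weyl_one | rewrite mulmx1].
have nz_b : b != 0 by case: rootPhi => nz _ _ _ _; apply: nz.
exists (refl b *m w'); first by apply: weyl_mul => //; apply: weyl_refl.
by rewrite mulmxA -[_ *m w' *m w]mulmxA w'w mulmx1 reflK.
Qed.

Lemma weyl_unitmx w : in_weyl Phi w -> w \in unitmx.
Proof. by case/weyl_inv=> w' _ /mulmx1_unit[]. Qed.

Lemma weyl_invmx w : in_weyl Phi w -> in_weyl Phi (invmx w).
Proof.
move=> W; have [w' W' w'w] := weyl_inv W.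
by rewrite -[invmx w]mul1mx -w'w mulmxK // weyl_unitmx.
Qed.

Lemma latt0 : in_coroot_lattice Phi 0.
Proof. by exists (fun _ => 0); rewrite big1 // => i _; rewrite mulr0z. Qed.

Lemma lattD u v :
  in_coroot_lattice Phi u -> in_coroot_lattice Phi v -> in_coroot_lattice Phi (u + v).
Proof.
move=> [c ->] [c' ->]; exists (fun i => c i + c' i).
by rewrite -big_split; apply: eq_bigr => i _; rewrite mulrzDr.
Qed.

Lemma lattMz u (z : int) : in_coroot_lattice Phi u -> in_coroot_lattice Phi (u *~ z).
Proof.
move=> [c ->]; exists (fun i => c i * z).
by rewrite mulrz_suml; apply: eq_bigr => i _; rewrite mulrzA.
Qed.

Lemma lattN u : in_coroot_lattice Phi u -> in_coroot_lattice Phi (- u).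
Proof. by move/(lattMz (-1)); rewrite mulrN1z. Qed.

Lemma latt_coroot b : b \in Phi -> in_coroot_lattice Phi (coroot b).
Proof.
move=> Phi_b; have lt_b : (index b Phi < size Phi)%N by rewrite index_mem.
pose j : 'I_(size Phi) := Ordinal lt_b.
exists (fun i => (i == j)%:Z); rewrite (bigD1 j) //= eqxx big1 ?addr0 ?nth_index //.
by move=> i /negbTE ->; rewrite mulr0z.
Qed.

Lemma latt_refl u b : b \in Phi ->
  in_coroot_lattice Phi u -> in_coroot_lattice Phi (u *m refl b).
Proof.
case: rootPhi => _ _ _ Phi_int _ Phi_b [c ->]; rewrite mulmx_suml.
apply: (big_ind (in_coroot_lattice Phi)); [exact: latt0 | exact: lattD | move=> i _].
have [z dot_z] := Phi_int _ _ (mem_nth 0 (ltn_ord i)) Phi_b.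
rewrite -scaler_int -scalemxAl reflE dotvC dot_z !scaler_int.
apply/lattMz/lattD; last apply/lattN/lattMz; by apply: latt_coroot; rewrite // mem_nth.
Qed.

Lemma latt_weyl u w : in_weyl Phi w ->
  in_coroot_lattice Phi u -> in_coroot_lattice Phi (u *m w).
Proof.
move=> W; elim: W u => {w} [|w b _ IH Phi_b] u Lu; first by rewrite mulmx1.
by rewrite mulmxA; apply: latt_refl => //; apply: IH.
Qed.

Lemma affine_unitmx g : in_affine Phi g -> g.1 \in unitmx.
Proof. by case=> /weyl_unitmx. Qed.

Lemma affine_mul g h : in_affine Phi g -> in_affine Phi h -> in_affine Phi (amul g h).
Proof.
case=> Wg Lg [Wh Lh]; split; first exact: weyl_mul.
by apply: lattD => //; apply: latt_weyl.
Qed.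

Lemma affine_ainv g : in_affine Phi g -> in_affine Phi (ainv g).
Proof.
case=> Wg Lg; split; first exact: weyl_invmx.
by apply/lattN/latt_weyl => //; apply: weyl_invmx.
Qed.

Lemma affine_conjE x0 z :
  affine_conj Phi x0 z -> exists2 g, in_affine Phi g & z = aconj g x0.
Proof.
case=> g [Ag gz]; exists g => //.
by rewrite /aconj -gz -amulA amulVg ?amul1g // affine_unitmx.
Qed.

Lemma affine_conj_aconj x0 g z : in_affine Phi g ->
  affine_conj Phi x0 z -> affine_conj Phi x0 (aconj g z).
Proof.
move=> Ag [h [Ah hz]]; exists (amul h g); split; first exact: affine_mul.
rewrite /aconj amulA -[amul g (amul (ainv g) _)]amulA amulgV ?affine_unitmx //.
by rewrite amul1g -!amulA hz.
Qed.

Local Notation cadjX x0 := (cadj (@amul R n) (affine_conj Phi x0)).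

Lemma cadj_aconj x0 g x y :
  in_affine Phi g -> cadjX x0 x y -> cadjX x0 (aconj g x) (aconj g y).
Proof.
move=> Ag [Xx [Xy xy]]; split; first exact: affine_conj_aconj.
split; first exact: affine_conj_aconj.
by rewrite -!aconjM ?xy // affine_unitmx.
Qed.

Lemma within_aconj x0 g x y m : in_affine Phi g ->
  within (cadjX x0) x y m -> within (cadjX x0) (aconj g x) (aconj g y) m.
Proof. by move=> Ag; apply: within_map => x' y'; apply: cadj_aconj. Qed.

End AffineWeylGroup.

Section DistanceFromBase.
Variables (R : realType) (n : nat) (Phi : seq 'rV[R]_n) (a : 'M[R]_n) (d k : nat).
Hypothesis rootPhi : is_root_system Phi.

Local Notation X := (affine_conj Phi (a, 0)).
Local Notation Xhat := (weyl_conj Phi a).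
Local Notation cadjX := (cadj (@amul R n) X).

Hypothesis diam_Xhat : conn_diam_le (fun x y : 'M[R]_n => x *m y) Xhat d.
Hypothesis near_Xhat :
  forall u, X (a, u) -> exists xh, Xhat xh /\ within cadjX (a, u) (xh, 0) k.

Lemma affine_conj_pair0 c : Xhat c -> X (c, 0).
Proof.
case=> w [W wc]; exists (w, 0); split; first by split; [|apply: latt0].
by rewrite !amul_pair0 wc.
Qed.

Lemma within_pair0 c c' m :
  within (cadj (fun x y : 'M[R]_n => x *m y) Xhat) c c' m ->
  within cadjX (c, 0) (c', 0) m.
Proof.
apply: (within_map (f := fun c : 'M[R]_n => (c, 0 : 'rV[R]_n))) => x y [Xx [Xy xy]].
by split; [|split]; rewrite ?amul_pair0 ?xy //; apply: affine_conj_pair0.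
Qed.

Lemma within_base y : X y -> within cadjX (a, 0) y (d + k).
Proof.
move=> Xy; case: (Xy) => [[w u] [[/= Ww _] gy]].
have wy : w *m y.1 = a *m w := congr1 fst gy.
have unit_w : w \in unitmx := weyl_unitmx rootPhi Ww.
pose h : 'M[R]_n * 'rV[R]_n := (invmx w, 0).
have Ah : in_affine Phi h by split; [apply: weyl_invmx | apply: latt0].
have hy : aconj h y = (a, y.2 *m invmx w) by rewrite aconj_pair0 invmxK wy mulmxK.
have ha : aconj h (a, 0) = (w *m a *m invmx w, 0) by rewrite aconj_pair0 invmxK mul0mx.
have Xhat_wa : Xhat (w *m a *m invmx w).
  by exists (invmx w); split; [apply: weyl_invmx | rewrite !mulmxA mulVmx ?mul1mx].
have [xh [Xhat_xh near_hy]] : exists xh, Xhat xh /\ within cadjX (aconj h y) (xh, 0) k.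
  by rewrite hy; apply: near_Xhat; rewrite -hy; apply: affine_conj_aconj.
have := within_trans (within_pair0 (diam_Xhat Xhat_wa Xhat_xh))
                     (within_sym (@cadj_sym _ _ _) near_hy).
rewrite -ha => /(within_aconj rootPhi (affine_ainv rootPhi Ah)).
by rewrite !aconjK // unitmx_inv.
Qed.

End DistanceFromBase.

Theorem proposition2p7 (R : realType) (n : nat) (Phi : seq 'rV[R]_n)
  (a : 'M[R]_n) (d k : nat) :
  is_root_system Phi ->
  in_weyl Phi a -> a *m a = 1%:M -> a != 1%:M ->
  let X := affine_conj Phi (a, 0) in
  let Xhat := weyl_conj Phi a in
  conn_diam (fun x y : 'M[R]_n => x *m y) Xhat d ->
  (forall u, X (a, u) ->
     exists xh, Xhat xh /\ within (cadj (@amul R n) X) (a, u) (xh, 0) k) ->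
  conn_diam_le (@amul R n) X (d + k).
Proof.
move=> rootPhi _ _ _ X Xhat [diam_Xhat _] near_Xhat x y Xx Xy.
have [g Ag ->] := affine_conjE rootPhi Xx.
have unit_g := affine_unitmx rootPhi Ag.
rewrite -(aconjKV unit_g y); apply: (within_aconj rootPhi Ag).
apply: (within_base rootPhi diam_Xhat near_Xhat).
by apply: affine_conj_aconj => //; apply: affine_ainv.
Qed.
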